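(* Let $\mathcal D$ be any probability distribution over $\mathbb R$ and let $(N,u)\sim H(n,\mathcal D)$ be a random additively separable hedonic game. Then $$\lim_{n\to\infty}\mathbb P\big((N,u)\text{ admits a contractually Nash-stable partition}\big)=1.$$
   Context: Additively separable hedonic game: a finite agent set $N$ and utilities $u_a(b)\in\mathbb R$ for ordered pairs $a\ne b$; for a coalition $C\ni a$, $u_a(C)=\sum_{b\in C\setminus\{a\}}u_a(b)$ (empty sum $0$). Random model $H(n,\mathcal D)$: $|N|=n$ and all $u_a(b)$, $a\ne b$, i.i.d. from $\mathcal D$. For a partition $\pi$, $\pi(a)$ is $a$'s coalition. A Nash deviation of $a$ is a move of $a$ alone to another coalition $C\in\pi$ or to a new singleton, such that $a$'s new coalition gives $a$ strictly higher utility. $\mathrm{FavorIn}(C,a)=\{b\in C\setminus\{a\}: u_b(C\cup\{a\})>u_b(C\setminus\{a\})\}$. A contractual deviation is a Nash deviation by $a$ with $\mathrm{FavorIn}(\pi(a),a)=\emptyset$; $\pi$ is contractually Nash-stable if no contractual deviation exists. *)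

From HB Require Import structures.
From mathcomp Require Import all_boot all_order all_algebra.
From mathcomp Require Import all_classical all_reals all_analysis.
Set Implicit Arguments. Unset Strict Implicit. Unset Printing Implicit Defensive.
Import Order.TTheory GRing.Theory Num.Theory.
Local Open Scope ring_scope.

Section Hedonic.
Variables (R : realType) (n : nat).
(* utilities u a b = u_a(b); the diagonal values are never used *)
Implicit Types (u : 'I_n -> 'I_n -> R) (C : {set 'I_n}) (Pi : {set {set 'I_n}}).

Definition util u (a : 'I_n) C : R := \sum_(b in C | b != a) u a b.

Definition favor_in u C (a : 'I_n) : {set 'I_n} :=
  [set b in C | (b != a) && (util u b (C :\ a) < util u b (a |: C))].

Definition nash_deviation u Pi (a : 'I_n) (Cnew : {set 'I_n}) : Prop :=
  ((exists C, [&& (C \in Pi)%bool & (C != finset.pblock Pi a)] /\ Cnew = a |: C) \/ Cnew = [set a])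
  /\ util u a (finset.pblock Pi a) < util u a Cnew.

Definition contractual_deviation u Pi (a : 'I_n) (Cnew : {set 'I_n}) : Prop :=
  nash_deviation u Pi a Cnew /\ favor_in u (finset.pblock Pi a) a = finset.set0.

Definition contractually_nash_stable u Pi : Prop :=
  finset.partition Pi [set: 'I_n] /\
  forall a Cnew, ~ contractual_deviation u Pi a Cnew.

Definition admits_CNS u : Prop := exists Pi, contractually_nash_stable u Pi.
End Hedonic.

Definition mutually_independent (R : realType) (d : measure_display)
  (T : measurableType d) (P : probability T R) (I : finType)
  (X : I -> T -> R) : Prop :=
  forall (S : {set I}) (B : I -> set R),
    (forall i, measurable (B i)) ->
    P (\bigcap_(i in [set` S]) (X i @^-1` B i))%classic
    = (\prod_(i in S) P (X i @^-1` B i)%classic)%E.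

From mathcomp Require Import all_boot all_order all_algebra.
From mathcomp Require Import all_classical all_reals all_analysis measurable_realfun.
From mathcomp Require Import ring lra.
Set Implicit Arguments.
Unset Strict Implicit.
Unset Printing Implicit Defensive.
Import Order.TTheory GRing.Theory Num.Theory.
Local Open Scope ring_scope.

(* If no utility is positive, the partition into singletons is contractually
   Nash-stable: nobody strictly gains by moving.  If every agent a is liked by
   someone (u_b(a) > 0 for some b != a), the grand coalition is: b lies in
   FavorIn(N, a), so a is never allowed to leave.  Let p = P(u > 0).  When
   p = 0 the first case holds almost surely; when p > 0 the second one fails
   only if some agent is disliked by all n - 1 others, which by a union bound
   has probability at most n (1 - p)^(n-1) -> 0.  Measurability of the event
   comes from the fact that stability only depends on the outcomes of finitely
   many comparisons between coalition utilities. *)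

Section stable_partitions.
Variables (R : realType) (n : nat).
Implicit Types (u : 'I_n -> 'I_n -> R) (a b : 'I_n) (C : {set 'I_n}).

(* Unlike [set [set: 'I_n]], these are partitions even for n = 0. *)
Definition singletons := preim_partition id [set: 'I_n].

Definition grand_coalition := preim_partition (fun=> tt) [set: 'I_n].

Lemma pblock_singletons a : finset.pblock singletons a = [set a].
Proof.
apply/setP => b; rewrite inE pblock_equivalence_partition ?inE //.
by split=> // /eqP->.
Qed.

Lemma pblock_grand_coalition a : finset.pblock grand_coalition a = [set: 'I_n].
Proof. by apply/setP => b; rewrite inE pblock_equivalence_partition ?inE. Qed.

Lemma util_set1 u a : util u a [set a] = 0.
Proof. by rewrite /util big1 // => b /andP[/set1P->]; rewrite eqxx. Qed.

Lemma util_setU1 u a b C :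
  a \notin C -> b != a -> util u b (a |: C) = u b a + util u b C.
Proof.
move=> aC ba; rewrite /util (bigD1 a) /=; last by rewrite setU11 eq_sym.
congr (_ + _); apply: eq_bigl => c; rewrite !inE.
by case: eqVneq => [->|]; rewrite ?(negbTE aC) ?andbF ?andbT.
Qed.

Lemma mem_favor_in u C a b :
  b \in C -> b != a -> 0 < u b a -> b \in favor_in u C a.
Proof.
move=> bC ba uba; rewrite inE bC ba /=.
have -> : a |: C = a |: (C :\ a) by apply/setP => c; rewrite !inE; case: eqVneq.
by rewrite util_setU1 ?setD11 // ltrDr.
Qed.

Lemma admits_CNS_nonpos u : (forall a b, a != b -> u a b <= 0) -> admits_CNS u.
Proof.
move=> u_le0; exists singletons; split; first exact: preim_partitionP.
move=> a Cnew [[_]]; rewrite pblock_singletons util_set1 ltNge => /negP + _; apply.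
by apply: sumr_le0 => b /andP[_ ba]; apply: u_le0; rewrite eq_sym.
Qed.

Lemma admits_CNS_liked u :
  (forall a, exists2 b, b != a & 0 < u b a) -> admits_CNS u.
Proof.
move=> liked; exists grand_coalition; split; first exact: preim_partitionP.
move=> a Cnew [_]; rewrite pblock_grand_coalition; have [b ba uba] := liked a.
by move=> favor0; have := mem_favor_in (finset.in_setT b) ba uba; rewrite favor0 inE.
Qed.

Definition util_cmp u : {ffun ('I_n * {set 'I_n}) * ('I_n * {set 'I_n}) -> bool} :=
  [ffun p => util u p.1.1 p.1.2 < util u p.2.1 p.2.2].

Lemma admits_CNS_util_cmp u v :
  util_cmp u = util_cmp v -> admits_CNS u -> admits_CNS v.
Proof.
move=> /ffunP uv [Pi [partPi stable]]; exists Pi; split => // a Cnew.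
have cmpE x C y C' : (util v x C < util v y C') = (util u x C < util u y C').
  by have := uv ((x, C), (y, C')); rewrite !ffunE.
have favorE C : favor_in v C a = favor_in u C a.
  by apply/setP => b; rewrite !inE cmpE.
move=> [[dev lt] fav]; apply: (stable a Cnew).
by rewrite /contractual_deviation /nash_deviation -favorE -cmpE.
Qed.

End stable_partitions.

Section measurable_events.
Context d (T : measurableType d) (R : realType).
Local Open Scope classical_set_scope.

Lemma measurable_fiber_invariant (K : finType) (c : T -> K) (A : set T) :
  (forall k, measurable (c @^-1` [set k])) ->
  (forall w w', c w = c w' -> A w -> A w') -> measurable A.
Proof.
move=> mc Ac; have -> : A = \bigcup_(k in c @` A) c @^-1` [set k].
  apply/seteqP; split => [w Aw|w [_ [w' Aw' <-] /= cw]]; last exact: Ac (esym cw) Aw'.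
  by exists (c w) => //; exists w.
by apply: fin_bigcup_measurable => //; exact: finite_finset.
Qed.

Lemma measurable_ltr_pattern (I : finType) (f g : I -> T -> R) (s : {ffun I -> bool}) :
  (forall i, measurable_fun setT (f i)) -> (forall i, measurable_fun setT (g i)) ->
  measurable [set w | [ffun i => f i w < g i w] = s].
Proof.
move=> mf mg; have -> : [set w | [ffun i => f i w < g i w] = s] =
    \bigcap_(i in setT) ((fun w => f i w < g i w) @^-1` [set s i]).
  apply/seteqP; split => [w <- i _|w ws]; first by rewrite /= ffunE.
  by apply/ffunP => i; rewrite ffunE; exact: ws.
apply: fin_bigcap_measurable => [|i _]; first exact: finite_finset.
by rewrite -[_ @^-1` _]setTI; exact: measurable_fun_ltr.
Qed.

Lemma measurable_fun_util n (U : 'I_n -> 'I_n -> T -> R) a C :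
  (forall a b, measurable_fun setT (U a b)) ->
  measurable_fun setT (fun w => util (fun a b => U a b w) a C).
Proof.
move=> mU; under eq_fun do rewrite /util big_mkcond.
by apply: measurable_sum => b; case: (_ && _); [exact: mU|exact: measurable_cst].
Qed.

Lemma measurable_admits_CNS n (U : 'I_n -> 'I_n -> T -> R) :
  (forall a b, measurable_fun setT (U a b)) ->
  measurable [set w | admits_CNS (fun a b => U a b w)].
Proof.
move=> mU.
apply: (@measurable_fiber_invariant _ (fun w => util_cmp (fun a b => U a b w))).
  by move=> s; apply: measurable_ltr_pattern => p; exact: measurable_fun_util.
by move=> w w'; exact: admits_CNS_util_cmp.
Qed.

End measurable_events.

Section geometric_decay.
Variable R : realType.

Lemma bin2_le_exprD1n (h : R) m : 0 <= h -> 'C(m, 2)%:R * h ^+ 2 <= (h + 1) ^+ m.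
Proof.
move=> h0; rewrite exprD1n; have [m_lt2|m_ge2] := ltnP m 2.
  by rewrite bin_small // mul0r sumr_ge0 // => i _; rewrite mulrn_wge0 ?exprn_ge0.
rewrite (bigD1 (Ordinal (m_ge2 : (2 < m.+1)%N))) //= mulr_natl lerDl.
by rewrite sumr_ge0 // => i _; rewrite mulrn_wge0 ?exprn_ge0.
Qed.

Lemma cvg_nat_mul_expr (r : R) :
  0 <= r < 1 -> ((fun k => k%:R * r ^+ k) @ \oo --> 0)%classic.
Proof.
case/andP=> r_ge0 r_lt1; set h := 1 - r; have h_gt0 : 0 < h by rewrite subr_gt0.
have bound m : (m.+2)%:R * r ^+ m.+2 <= 2 / h ^+ 2 * harmonic m.
  have r1h : (r * (h + 1)) ^+ m.+2 <= 1 by apply: exprn_ile1; rewrite /h; nra.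
  have binE : 'C(m.+2, 2)%:R * 2 = (m.+2)%:R * (m.+1)%:R :> R.
    by rewrite -natrM -natrM mulnC -mul_bin_diag bin1.
  (* r^k (1 + h)^k <= 1 and (1 + h)^k >= C(k, 2) h^2 *)
  have := ler_wpM2l (exprn_ge0 m.+2 r_ge0) (bin2_le_exprD1n m.+2 (ltW h_gt0)).
  rewrite -exprMn mulrC => /le_trans /(_ r1h).
  rewrite /harmonic /= -mulrA -invfM ler_pdivlMr ?mulr_gt0 ?exprn_gt0 // => bin_bound.
  have -> : (m.+2)%:R * r ^+ m.+2 * (h ^+ 2 * (m.+1)%:R) =
            'C(m.+2, 2)%:R * 2 * h ^+ 2 * r ^+ m.+2 by rewrite binE; ring.
  nra.
rewrite -(@cvg_shiftn 2 R^o).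
apply: (@squeeze_cvgr _ _ _ _ (cst 0) (fun m => 2 / h ^+ 2 * harmonic m)).
- by apply: nearW => m; rewrite /= addn2 bound mulr_ge0 ?exprn_ge0.
- exact: (@cvg_cst R^o).
- by rewrite -(mulr0 (2 / h ^+ 2)); exact: cvgMl_tmp cvg_harmonic.
Qed.

Lemma cvg_nat_mul_expr_pred (r : R) :
  0 <= r < 1 -> ((fun n => n%:R * r ^+ n.-1) @ \oo --> 0)%classic.
Proof.
move=> r01; have r_lt1 : `|r| < 1 by rewrite ger0_norm //; case/andP: r01.
suff : ((fun k => k%:R * r ^+ k + r ^+ k) @ \oo --> 0)%classic.
  rewrite -(@cvg_shiftS R^o (fun n => n%:R * r ^+ n.-1) (nbhs 0)).
  apply: cvg_trans; apply: near_eq_cvg; apply: nearW => k.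
  by rewrite /= -natr1 mulrDl mul1r.
by rewrite -[0]addr0; exact: cvgD (cvg_nat_mul_expr r01) (cvg_expr r_lt1).
Qed.

End geometric_decay.

Section measure_union_bound.
Context d (T : measurableType d) (R : realType) (mu : {measure set T -> \bar R}).
Local Open Scope classical_set_scope.

Lemma le_measure_sum (I : Type) (s : seq I) (F : I -> set T) (A : set T) :
  measurable A -> (forall i, measurable (F i)) ->
  A `<=` \big[setU/set0]_(i <- s) F i -> (mu A <= \sum_(i <- s) mu (F i))%E.
Proof.
move=> mA mF AF; have mU s' : measurable (\big[setU/set0]_(i <- s') F i).
  exact: bigsetU_measurable.
apply: le_trans (le_measure _ _ _ AF) _; rewrite ?inE //.
elim: s {AF} => [|i s IH]; first by rewrite !big_nil measure0.
by rewrite !big_cons; apply: le_trans (measureU2 _ _ _) (leeD2l _ IH).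
Qed.

End measure_union_bound.

Section arcs.
Variable n : nat.
Local Notation arc := {ab : 'I_n * 'I_n | ab.1 != ab.2}.

Definition arcs_to (a : 'I_n) : {set arc} := [set ab | (val ab).2 == a].

Lemma card_arcs_to a : #|arcs_to a| = n.-1.
Proof.
rewrite -[n in RHS]card_ord -(cardsC1 a).
rewrite -(card_in_imset (f := fun ab : arc => (val ab).1)).
  apply: eq_card => b; rewrite !inE; apply/imsetP/idP => [[ab]|ba].
    by rewrite inE => /eqP <- ->; exact: (valP ab).
  by exists (exist _ (b, a) ba); rewrite // inE.
move=> ab1 ab2; rewrite !inE => /eqP a1 /eqP a2 b12.
apply: val_inj.
by rewrite [val ab1]surjective_pairing [val ab2]surjective_pairing b12 a1 a2.
Qed.

End arcs.

Section random_game.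
Context (R : realType) (D : probability (measurableTypeR R) R).
Context d (T : measurableType d) (P : probability T R).
Variable X : forall n : nat, 'I_n -> 'I_n -> {RV P >-> R}.
Arguments X : clear implicits.
Local Open Scope classical_set_scope.
Local Notation arc n := {ab : 'I_n * 'I_n | ab.1 != ab.2}.

Hypothesis X_distr : forall n (a b : 'I_n), a != b ->
  forall B : set R, measurable B -> P (X n a b @^-1` B) = D B.
Hypothesis X_indep : forall n, mutually_independent P
  (fun ab : arc n => X n (val ab).1 (val ab).2).

Let CNS n := [set w | admits_CNS (fun a b => X n a b w)].

Lemma measurable_CNS n : measurable (CNS n).
Proof. exact: measurable_admits_CNS (fun a b => measurable_funP (X n a b)). Qed.

Lemma prob_CNS_eq1 n : D `]0, +oo[ = 0%E -> P (CNS n) = 1%E.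
Proof.
move=> D0; have mC := measurableC (measurable_CNS n).
suff P0 : P (~` CNS n) = 0%E by rewrite -[CNS n]setCK probability_setC // P0 sube0.
apply/le_anti; rewrite measure_ge0 andbT.
have liked (ab : arc n) : measurable (X n (val ab).1 (val ab).2 @^-1` `]0, +oo[).
  exact: measurable_funPTI.
have cover : ~` CNS n `<=`
    \big[setU/set0]_(ab : arc n) X n (val ab).1 (val ab).2 @^-1` `]0, +oo[.
  move=> w notCNS; rewrite -bigcup_seq; apply: contrapT => none; apply: notCNS.
  apply: admits_CNS_nonpos => a b ab; rewrite leNgt; apply/negP => pos.
  apply: none; exists (exist _ (a, b) ab); first by rewrite /= mem_index_enum.
  by rewrite /= in_itv /= pos.
apply: le_trans (le_measure_sum P mC liked cover) _.
by rewrite big1 // => ab _; apply: etrans (X_distr (valP ab) _) D0.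
Qed.

Lemma prob_CNS_ge n (r : R) : D (~` `]0, +oo[) = r%:E ->
  ((1 - n%:R * r ^+ n.-1)%:E <= P (CNS n))%E.
Proof.
move=> Dr; have mC := measurableC (measurable_CNS n).
pose disliked (a : 'I_n) := \bigcap_(ab in [set` arcs_to a])
  (X n (val ab).1 (val ab).2 @^-1` ~` `]0, +oo[).
have m_disliked a : measurable (disliked a).
  apply: fin_bigcap_measurable => [|ab _]; first exact: finite_finpred.
  by apply/measurable_funPTI/measurableC.
have P_disliked a : P (disliked a) = (r ^+ n.-1)%:E.
  rewrite /disliked X_indep => [|ab]; last exact/measurableC.
  rewrite (eq_bigr (fun=> r%:E)) => [|ab _]; last first.
    exact: etrans (X_distr (valP ab) (measurableC (measurable_itv _))) Dr.
  by rewrite prodEFin prodr_const card_arcs_to.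
have cover : ~` CNS n `<=` \big[setU/set0]_(a : 'I_n) disliked a.
  move=> w notCNS; rewrite -bigcup_seq; apply: contrapT => none; apply: notCNS.
  apply: admits_CNS_liked => a; apply: contrapT => unliked; apply: none.
  exists a; rewrite /= ?mem_index_enum // => ab /=; rewrite inE => /eqP ab_a.
  rewrite /= in_itv /= andbT => pos; apply: unliked.
  by exists (val ab).1; rewrite -ab_a ?(valP ab).
have := le_measure_sum P mC m_disliked cover.
rewrite (eq_bigr _ (fun a _ => P_disliked a)) sumEFin sumr_const card_ord.
move=> bound.
by rewrite -[CNS n]setCK probability_setC // EFinB mulr_natl leeB.
Qed.

End random_game.

Theorem proposition1 (R : realType) (D : probability (measurableTypeR R) R)
  (d : measure_display) (T : measurableType d) (P : probability T R)
  (X : forall n : nat, 'I_n -> 'I_n -> {RV P >-> R}) :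
  (forall n (a b : 'I_n), a != b ->
     forall B : set R, measurable B -> P (X n a b @^-1` B)%classic = D B) ->
  (forall n, mutually_independent P
     (fun ab : {ab : 'I_n * 'I_n | ab.1 != ab.2} => X n (val ab).1 (val ab).2)) ->
  ((fun n => P [set w | admits_CNS (fun a b => X n a b w)]%classic) @ \oo
    --> 1%E)%classic.
Proof.
move=> X_distr X_indep.
have mpos : measurable (`]0, +oo[%classic : set R) by exact: measurable_itv.
have [D0|D_neq0] := eqVneq (D `]0, +oo[%classic) 0%E.
  under eq_fun do rewrite (prob_CNS_eq1 X_distr _ D0).
  exact: cvg_cst.
set r := fine (D (~` `]0, +oo[)%classic).
have Dr : D (~` `]0, +oo[)%classic = r%:E.
  by rewrite fineK // fin_num_measure //; exact: measurableC.
have r01 : 0 <= r < 1.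
  rewrite -!lee_fin -lte_fin -Dr measure_ge0 probability_setC //.
  by rewrite lteBlDr ?fin_num_measure // lteDl // lt0e D_neq0 measure_ge0.
apply: (@squeeze_cvge _ _ _ _ (fun n => (1 - n%:R * r ^+ n.-1)%:E) _ (cst 1%E)).
- apply: nearW => n; rewrite (prob_CNS_ge X_distr X_indep n Dr) /=.
  exact: probability_le1 (measurable_CNS X n).
- apply: cvg_EFin; first exact: nearW.
  rewrite -[X in (_ --> X)%classic]subr0; apply: cvgB; first exact: cvg_cst.
  exact: cvg_nat_mul_expr_pred.
- exact: cvg_cst.
Qed.
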